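(* Let $\mathbb G=V_1\times V_2$ be a step-two Carnot group with $\mathcal A(V_1\times V_2)\subsetneq\mathcal A_h(\mathbb G)$. Then there are $x_1,x_2,x_3\in V_1$ such that $\operatorname{Lie}(x_1,x_2,x_3)$ is isomorphic to $\mathbb F_3$ (equivalently, $[x_1,x_2],[x_1,x_3],[x_2,x_3]$ are linearly independent). In addition, there is a bilinear map $b:V_1\times V_2\to\mathbb R$ such that $b(x,[x,x'])=0$ for all $x,x'\in V_1$ and $b(x_1,[x_2,x_3])=1$.
   Context: A step-two Carnot group is $\mathbb G=V_1\times V_2$ ($V_1,V_2$ finite-dimensional real vector spaces, $V_2\ne\{0\}$) with a bilinear skew-symmetric $[\cdot,\cdot]:V_1\times V_1\to V_2$ whose image spans $V_2$, and group law $(x,z)\cdot(x',z')=(x+x',z+z'+[x,x'])$. $\mathcal A_h(\mathbb G)$ is the space of maps $f:\mathbb G\to\mathbb R$ such that for all $(x,z)\in\mathbb G$, $y\in V_1$, $t\mapsto f((x,z)\cdot(ty,0))$ is affine; $\mathcal A(V_1\times V_2)$ is the space of maps affine in the usual sense. For $x_1,x_2,x_3\in V_1$, $\operatorname{Lie}(x_1,x_2,x_3):=\operatorname{span}\{x_1,x_2,x_3\}\times\operatorname{span}\{[x_i,x_j]:i,j\in\{1,2,3\}\}$ with the restricted bracket; it is isomorphic (via a bijective Carnot morphism) to $\mathbb F_3=\Lambda^1(\mathbb R^3)\times\Lambda^2(\mathbb R^3)$ (bracket $\theta\wedge\theta'$) exactly when $\dim\operatorname{span}\{[x_i,x_j]\}=3$.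 *)

From HB Require Import structures.
From mathcomp Require Import all_boot all_order all_algebra.
From mathcomp Require Import reals.
Set Implicit Arguments. Unset Strict Implicit. Unset Printing Implicit Defensive.
Import Order.TTheory GRing.Theory Num.Theory.
Local Open Scope ring_scope.

Section CarnotDefs.
Variables (R : realType) (V1 V2 : vectType R).

Definition lin_form (V : vectType R) (l : V -> R) : Prop :=
  forall (a : R) (u v : V), l (a *: u + v) = a * l u + l v.

Definition bilin11 (br : V1 -> V1 -> V2) : Prop :=
  (forall y, forall a u v, br (a *: u + v) y = a *: br u y + br v y) /\
  (forall x, forall a u v, br x (a *: u + v) = a *: br x u + br x v).

Definition step2_carnot (br : V1 -> V1 -> V2) : Prop :=
  [/\ bilin11 br,
      (forall x y, br x y = - br y x),
      (exists s : seq (V1 * V1), <<[seq br p.1 p.2 | p <- s]>>%VS = fullv)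
    &
      (0 < \dim (fullv : {vspace V2}))%N].

Definition carnot_mul (br : V1 -> V1 -> V2) (p q : V1 * V2) : V1 * V2 :=
  (p.1 + q.1, p.2 + q.2 + br p.1 q.1).

Definition affine_fun (g : R -> R) : Prop :=
  exists a c : R, forall t, g t = a * t + c.

Definition horiz_affine (br : V1 -> V1 -> V2) (f : V1 * V2 -> R) : Prop :=
  forall (p : V1 * V2) (y : V1),
    affine_fun (fun t => f (carnot_mul br p (t *: y, 0))).

Definition usual_affine (f : V1 * V2 -> R) : Prop :=
  exists (l1 : V1 -> R) (l2 : V2 -> R) (c : R),
    [/\ lin_form l1, lin_form l2 & forall p, f p = l1 p.1 + l2 p.2 + c].

Definition bilin12 (b : V1 -> V2 -> R) : Prop :=
  (forall z, lin_form (fun x => b x z)) /\ (forall x, lin_form (b x)).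

End CarnotDefs.

(* Write vdiff w g (x, z) = g (x, z + w) - g (x, z).  If g is horizontally
   affine then so is every vdiff w g, and t |-> g (x, z + t [a,c]) is affine,
   so vdiff [a,c] (vdiff [a,c] g) = 0.  Starting from a horizontally affine g
   that is not affine and replacing g by vdiff [a,c] g as long as the latter
   is not affine, [a,c] running through brackets spanning V2, we may assume
   that every vdiff w g is affine.  The second vertical differences of g are
   then a constant symmetric bilinear form S with S ([x,c], [x,d]) = 0.  If
   S <> 0, some b (x, z) = S ([y,x], z) is a nonzero bilinear form with
   b (x, [x,x']) = 0.  If S = 0, then g (x, z) = phi x + M z + B (x, z) with
   M linear and B bilinear; horizontal affinity forces B (y, [x,y]) = 0 and
   phi affine, so B <> 0 since g is not affine.  Such a form b can be
   normalised to b (x1, [x2,x3]) = 1, and then b x3, b x2, b x1 show that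
   [x1,x2], [x1,x3], [x2,x3] are free. *)

From mathcomp Require Import all_boot all_order all_algebra.
From mathcomp Require Import reals.
From mathcomp Require Import ring lra.
From Stdlib Require Import Classical.
Import GRing.Theory Num.Theory.
Local Open Scope ring_scope.
Set Implicit Arguments. Unset Strict Implicit.

Section LinearFor.
Variables (R : pzRingType) (U : lmodType R) (W : zmodType).
Variables (s : GRing.Scale.law R W) (f : U -> W).
Hypothesis f_lin : linear_for s f.

Lemma lin_forB : {morph f : x y / x - y}.
Proof. exact: zmod_morphism_linear. Qed.

Lemma lin_for0 : f 0 = 0.
Proof. by move: (lin_forB 0 0); rewrite !subrr. Qed.

Lemma lin_forN : {morph f : x / - x}.
Proof. by move=> x; rewrite -{1}(sub0r x) lin_forB lin_for0 sub0r. Qed.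

Lemma lin_forD : {morph f : x y / x + y}.
Proof. by move=> x y; rewrite -{1}(opprK y) lin_forB lin_forN opprK. Qed.

Lemma lin_forZ : scalable_for s f.
Proof. exact: scalable_linear. Qed.

End LinearFor.

Section AffineFunctions.
Variable R : realType.
Implicit Types h : R -> R.

Lemma affine_funE h : affine_fun h -> forall t, h t = h 0 + t * (h 1 - h 0).
Proof. by case=> a [c h_aff] t; rewrite !h_aff; ring. Qed.

Lemma eq_affine_fun h h' : h =1 h' -> affine_fun h' -> affine_fun h.
Proof. by move=> eq_h [a [c h_aff]]; exists a, c => t; rewrite eq_h h_aff. Qed.

Lemma affine_fun_comb u v h1 h2 : affine_fun h1 -> affine_fun h2 ->
  affine_fun (fun t => u * h1 t + v * h2 t).
Proof.
move=> [a1 [c1 h1_aff]] [a2 [c2 h2_aff]].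
by exists (u * a1 + v * a2), (u * c1 + v * c2) => t; rewrite h1_aff h2_aff; ring.
Qed.

Lemma affine_fun_id : affine_fun (fun t : R => t).
Proof. by exists 1, 0 => t; ring. Qed.

Lemma affine_fun_midpoint h t : affine_fun h -> h t + h (- t) = 2 * h 0.
Proof. by move=> h_aff; rewrite (affine_funE h_aff t) (affine_funE h_aff (- t)); ring. Qed.

End AffineFunctions.

Section LinearForms.
Variables (R : realType) (V : vectType R).
Implicit Types (l : V -> R) (X : seq V).

Lemma eq_lin_form l l' : l =1 l' -> lin_form l' -> lin_form l.
Proof. by move=> eq_l l'_lin a u v; rewrite !eq_l l'_lin. Qed.

Lemma lin_formZ l : lin_form l -> forall a u, l (a *: u) = a * l u.
Proof. exact: lin_forZ. Qed.

Lemma lin_form_cst0 : lin_form (fun _ : V => 0).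
Proof. by move=> a u v; ring. Qed.

Lemma lin_form_add l l' : lin_form l -> lin_form l' -> lin_form (fun x => l x + l' x).
Proof. by move=> l_lin l'_lin a u v; rewrite l_lin l'_lin; ring. Qed.

Lemma lin_form_scale c l : lin_form l -> lin_form (fun x => c * l x).
Proof. by move=> l_lin a u v; rewrite l_lin; ring. Qed.

Lemma lin_form_affine_lines (phi : V -> R) :
  (forall x y, affine_fun (fun t => phi (x + t *: y))) ->
  lin_form (fun x => phi x - phi 0).
Proof.
move=> phi_aff.
have phiZ y t : phi (t *: y) = phi 0 + t * (phi y - phi 0).
  by have := affine_funE (phi_aff 0 y) t; rewrite scale0r scale1r !add0r.
have phiD u v : phi (u + v) = phi u + phi v - phi 0.
  have := affine_fun_midpoint 1 (phi_aff (u + v) (u - v)).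
  rewrite scale1r scale0r addr0 scaleN1r opprB.
  have -> : u + v + (u - v) = 2 *: u by rewrite scaler_nat mulr2n addrACA subrr addr0.
  have -> : u + v + (v - u) = 2 *: v.
    by rewrite scaler_nat mulr2n (addrC u v) addrACA subrr addr0.
  by rewrite !phiZ => E; lra.
by move=> a u v /=; rewrite phiD phiZ; ring.
Qed.

Lemma span_fullv_ind X (P : V -> Prop) : <<X>>%VS = fullv ->
  P 0 -> (forall u v, P u -> P v -> P (u + v)) ->
  (forall c x, x \in X -> P (c *: x)) -> forall u, P u.
Proof.
move=> X_span P0 PD PZ u.
have u_span : u \in <<in_tuple X>>%VS by rewrite /= X_span memvf.
rewrite (coord_span u_span); apply: big_ind => // i _.
by apply: PZ; apply: mem_nth.
Qed.

Lemma lin_form_span X (F : V -> R) : <<X>>%VS = fullv ->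
  {morph F : u v / u + v} -> (forall c x, x \in X -> F (c *: x) = c * F x) ->
  lin_form F.
Proof.
move=> X_span FD FZ.
have F0 : F 0 = 0 by move: (FD 0 0); rewrite addr0 => E; lra.
suff FZall u a : F (a *: u) = a * F u by move=> a u v; rewrite FD FZall.
move: u a; apply: (span_fullv_ind X_span) => [a|u v Fu Fv a|c x Xx a].
- by rewrite scaler0 F0 mulr0.
- by rewrite scalerDr !FD Fu Fv mulrDr.
- by rewrite scalerA !FZ // mulrA.
Qed.

Lemma lin_form_span_neq0 X l u : <<X>>%VS = fullv -> lin_form l ->
  l u <> 0 -> exists2 x, x \in X & l x <> 0.
Proof.
move=> X_span l_lin lu_neq0; apply: NNPP => l_X0; apply: lu_neq0.
apply: (span_fullv_ind (P := fun v => l v = 0) X_span) => [|v w lv lw|c x Xx].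
- exact: lin_for0 l_lin.
- by rewrite (lin_forD l_lin) lv lw addr0.
- rewrite (lin_formZ l_lin); have [-> | lx_neq0] := classic (l x = 0).
    by rewrite mulr0.
  by case: l_X0; exists x.
Qed.

End LinearForms.

Section UsualAffine.
Variables (R : realType) (V1 V2 : vectType R).
Implicit Types (f g : V1 * V2 -> R) (w : V2).

Lemma eq_usual_affine f f' : f =1 f' -> usual_affine f' -> usual_affine f.
Proof.
move=> eq_f [l1 [l2 [c [l1_lin l2_lin f'E]]]].
by exists l1, l2, c; split => // p; rewrite eq_f f'E.
Qed.

Lemma usual_affine_cst c : usual_affine (fun _ : V1 * V2 => c).
Proof.
exists (fun _ => 0), (fun _ => 0), c; split; try exact: lin_form_cst0.
by move=> p; ring.
Qed.

Lemma usual_affine_add f f' : usual_affine f -> usual_affine f' ->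
  usual_affine (fun p => f p + f' p).
Proof.
move=> [l1 [l2 [c [l1_lin l2_lin fE]]]] [l1' [l2' [c' [l1'_lin l2'_lin f'E]]]].
exists (fun x => l1 x + l1' x), (fun z => l2 z + l2' z), (c + c').
by split; [exact: lin_form_add | exact: lin_form_add | move=> p; rewrite fE f'E; ring].
Qed.

Lemma usual_affine_scale c f : usual_affine f -> usual_affine (fun p => c * f p).
Proof.
move=> [l1 [l2 [d [l1_lin l2_lin fE]]]].
exists (fun x => c * l1 x), (fun z => c * l2 z), (c * d).
by split; [exact: lin_form_scale | exact: lin_form_scale | move=> p; rewrite fE; ring].
Qed.

Definition vdiff w g : V1 * V2 -> R := fun p => g (p.1, p.2 + w) - g p.

Lemma vdiffC w w' g p : vdiff w (vdiff w' g) p = vdiff w' (vdiff w g) p.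
Proof. by rewrite /vdiff /= (addrAC p.2); ring. Qed.

Lemma vdiffD w w' g p :
  vdiff (w + w') g p = vdiff w g p + vdiff w' g p + vdiff w (vdiff w' g) p.
Proof. by rewrite /vdiff /= addrA (addrAC p.2); ring. Qed.

Lemma vdiff_cst0 g : vdiff 0 g =1 fun _ => 0.
Proof. by move=> p; rewrite /vdiff addr0 -surjective_pairing subrr. Qed.

Lemma usual_affine_vdiff w g : usual_affine g -> usual_affine (vdiff w g).
Proof.
move=> [l1 [l2 [c [l1_lin l2_lin gE]]]].
apply: (eq_usual_affine _ (usual_affine_cst (l2 w))) => p.
by rewrite /vdiff !gE /= (lin_forD l2_lin); ring.
Qed.

End UsualAffine.

Arguments usual_affine_cst {R V1 V2} c.

Section Carnot.
Variables (R : realType) (V1 V2 : vectType R) (br : V1 -> V1 -> V2).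
Hypothesis br_lin : bilin11 br.

Lemma brDl u v y : br (u + v) y = br u y + br v y.
Proof. exact: lin_forD (br_lin.1 y) u v. Qed.
Lemma brDr x u v : br x (u + v) = br x u + br x v.
Proof. exact: lin_forD (br_lin.2 x) u v. Qed.
Lemma brNl u y : br (- u) y = - br u y.
Proof. exact: lin_forN (br_lin.1 y) u. Qed.
Lemma brNr x u : br x (- u) = - br x u.
Proof. exact: lin_forN (br_lin.2 x) u. Qed.
Lemma brZl a u y : br (a *: u) y = a *: br u y.
Proof. exact: lin_forZ (br_lin.1 y) a u. Qed.
Lemma brZr a x u : br x (a *: u) = a *: br x u.
Proof. exact: lin_forZ (br_lin.2 x) a u. Qed.
Lemma br0l y : br 0 y = 0.
Proof. exact: lin_for0 (br_lin.1 y). Qed.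
Lemma br0r x : br x 0 = 0.
Proof. exact: lin_for0 (br_lin.2 x). Qed.

Lemma horiz_affine_vdiff g w : horiz_affine br g -> horiz_affine br (vdiff w g).
Proof.
move=> g_aff p y.
have vdiffE t : vdiff w g (carnot_mul br p (t *: y, 0)) =
    1 * g (carnot_mul br (p.1, p.2 + w) (t *: y, 0)) +
    (-1) * g (carnot_mul br p (t *: y, 0)).
  by rewrite /vdiff /carnot_mul /= !addr0 (addrAC p.2); ring.
exact: eq_affine_fun vdiffE (affine_fun_comb 1 (-1) (g_aff _ y) (g_aff p y)).
Qed.

(* (x, z + t[a,c]) is the midpoint of the horizontal segment in direction
   a + t c whose endpoints lie on the horizontal lines
   t |-> (x + a, z + [x,a]) (t c, 0) and t |-> (x - a, z - [x,a]) (- t c, 0). *)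
Lemma horiz_affine_vertical g x z a c : horiz_affine br g ->
  affine_fun (fun t => g (x, z + t *: br a c)).
Proof.
move=> g_aff.
have line_p := g_aff (x + a, z + br x a) c.
have line_m := g_aff (x - a, z - br x a) (- c).
apply: eq_affine_fun (affine_fun_comb 2^-1 2^-1 line_p line_m) => t /=.
have := affine_fun_midpoint 1 (g_aff (x, z + t *: br a c) (a + t *: c)).
rewrite /carnot_mul /= !scale0r !scale1r br0r !addr0.
have -> : (x + (a + t *: c), z + t *: br a c + br x (a + t *: c)) =
          (x + a + t *: c, z + br x a + br (x + a) (t *: c)).
  congr (_, _); first by rewrite addrA.
  rewrite brDr brDl !brZr -!addrA; congr (_ + _).
  by rewrite addrC -addrA; congr (_ + _); rewrite addrC.
have -> : (x + (-1) *: (a + t *: c), z + t *: br a c + br x ((-1) *: (a + t *: c))) =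
          (x - a + t *: - c, z - br x a + br (x - a) (t *: - c)).
  congr (_, _); first by rewrite scaleN1r opprD scalerN addrA.
  rewrite scaleN1r brNr brDr brDl brNl !brZr brNr !scalerN opprD -!addrA.
  congr (_ + _); rewrite addrC -addrA; congr (_ + _).
  by rewrite brNr scalerN opprK.
by move=> E; lra.
Qed.

Lemma vdiffZ_bracket g t a c p : horiz_affine br g ->
  vdiff (t *: br a c) g p = t * vdiff (br a c) g p.
Proof.
case: p => x z g_aff; have := affine_funE (horiz_affine_vertical x z a c g_aff) t.
by rewrite /vdiff /= scale0r scale1r addr0 => ->; ring.
Qed.

Lemma vdiff_bracket2 g a c p : horiz_affine br g ->
  vdiff (br a c) (vdiff (br a c) g) p = 0.
Proof.
case: p => x z g_aff; have := affine_funE (horiz_affine_vertical x z a c g_aff) 2.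
by rewrite /vdiff /= scale0r scale1r addr0 scaler_nat mulr2n addrA => ->; ring.
Qed.

(* Replace g by vdiff (br q.1 q.2) g whenever the latter is not affine: since
   the vdiff's commute and vdiff [a,c] (vdiff [a,c] g) = 0, the brackets
   already treated stay treated. *)
Lemma exists_nonaffine_affine_vdiffs (s : seq (V1 * V1)) f :
  horiz_affine br f -> ~ usual_affine f ->
  exists g, [/\ horiz_affine br g, ~ usual_affine g &
    forall q, q \in s -> usual_affine (vdiff (br q.1 q.2) g)].
Proof.
move=> f_aff f_naff; elim: s => [|q s [g [g_aff g_naff s_aff]]].
  by exists f; split.
case: (classic (usual_affine (vdiff (br q.1 q.2) g))) => [q_aff|q_naff].
  by exists g; split => // q'; rewrite inE => /orP [/eqP -> //|]; apply: s_aff.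
exists (vdiff (br q.1 q.2) g); split => //; first exact: horiz_affine_vdiff.
move=> q'; rewrite inE => /orP [/eqP ->|/s_aff q'_aff].
  by apply: (eq_usual_affine _ (usual_affine_cst 0)) => p; apply: vdiff_bracket2.
by apply: (eq_usual_affine _ (usual_affine_vdiff (br q.1 q.2) q'_aff)); apply: vdiffC.
Qed.

Definition alternating_form (b : V1 -> V2 -> R) :=
  bilin12 b /\ forall x x', b x (br x x') = 0.

Hypothesis br_skew : forall x y, br x y = - br y x.
Variable s : seq (V1 * V1).
Hypothesis s_span : <<[seq br q.1 q.2 | q <- s]>>%VS = fullv.

Section HorizontallyAffine.
Variable g : V1 * V2 -> R.
Hypothesis g_aff : horiz_affine br g.
Hypothesis s_aff : forall q, q \in s -> usual_affine (vdiff (br q.1 q.2) g).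

Lemma usual_affine_vdiff_all u : usual_affine (vdiff u g).
Proof.
move: u; apply: (span_fullv_ind s_span) => [|u v u_aff v_aff|c _ /mapP[q q_s ->]].
- exact: eq_usual_affine (vdiff_cst0 g) (usual_affine_cst 0).
- apply: eq_usual_affine (usual_affine_add (usual_affine_add u_aff v_aff)
                                           (usual_affine_vdiff u v_aff)).
  exact: vdiffD.
- apply: eq_usual_affine (usual_affine_scale c (s_aff q_s)) => p.
  exact: vdiffZ_bracket.
Qed.

Definition vhess u u' := g (0, u + u') - g (0, u) - g (0, u') + g (0, 0).

Lemma vdiff2E u u' p : vdiff u (vdiff u' g) p = vhess u u'.
Proof.
have [l1 [l2 [c [_ l2_lin gE]]]] := usual_affine_vdiff_all u'.
have -> : vhess u u' = vdiff u' g (0, u) - vdiff u' g (0, 0).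
  by rewrite /vhess /vdiff /= add0r; ring.
have -> : vdiff u (vdiff u' g) p = vdiff u' g (p.1, p.2 + u) - vdiff u' g p by [].
by rewrite !gE /= !(lin_forD l2_lin) (lin_for0 l2_lin); ring.
Qed.

Lemma vhess_linl u' : lin_form (vhess^~ u').
Proof.
have [l1 [l2 [c [_ l2_lin gE]]]] := usual_affine_vdiff_all u'.
apply: (eq_lin_form _ l2_lin) => u; rewrite -(vdiff2E u u' (0, 0)).
by rewrite {1}/vdiff !gE /= (lin_forD l2_lin); ring.
Qed.

Lemma vhessC u u' : vhess u u' = vhess u' u.
Proof. by rewrite /vhess (addrC u u'); ring. Qed.

Lemma vhess_linr u : lin_form (vhess u).
Proof. by move=> a v w; rewrite !(vhessC u); apply: vhess_linl. Qed.

Lemma vhess_bracket x c d : vhess (br x c) (br x d) = 0.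
Proof.
have vhess_diag y : vhess (br x y) (br x y) = 0.
  by rewrite -(vdiff2E _ _ (0, 0)) vdiff_bracket2.
have := vhess_diag (c + d).
rewrite brDr (lin_forD (vhess_linl _)) !(lin_forD (vhess_linr _)) !vhess_diag.
by rewrite (vhessC (br x d)) => E; lra.
Qed.

Lemma alternating_form_of_vhess u u' : vhess u u' <> 0 ->
  exists b x z, alternating_form b /\ b x z <> 0.
Proof.
move=> uu'_neq0.
have [_ /mapP[q _ ->] qu'_neq0] := lin_form_span_neq0 s_span (vhess_linl u') uu'_neq0.
exists (fun x z => vhess (br q.1 x) z), q.2, u'; split => //; split; first split.
- move=> z a x y /=.
  by rewrite brDr brZr (lin_forD (vhess_linl _)) (lin_formZ (vhess_linl _)).
- by move=> x; apply: vhess_linr.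
- by move=> x x'; rewrite br_skew (lin_forN (vhess_linl _)) vhess_bracket oppr0.
Qed.

Section FlatVerticalHessian.
Hypothesis g_naff : ~ usual_affine g.
Hypothesis vhess0 : forall u u', vhess u u' = 0.

Definition mixed x z := g (x, z) - g (x, 0) - g (0, z) + g (0, 0).

Lemma lin_form_vdiff x : lin_form (fun z => vdiff z g (x, 0)).
Proof.
apply: (lin_form_span s_span) => [u v | c _ /mapP[q _ ->]].
- by rewrite vdiffD vdiff2E vhess0 addr0.
- exact: vdiffZ_bracket.
Qed.

Lemma mixed_linr x : lin_form (mixed x).
Proof.
apply: eq_lin_form (lin_form_add (lin_form_vdiff x) (lin_form_scale (-1) (lin_form_vdiff 0))).
by move=> z; rewrite /mixed /vdiff /= add0r; ring.
Qed.

Lemma mixed_linl z : lin_form (mixed^~ z).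
Proof.
have [l1 [l2 [c [l1_lin _ gE]]]] := usual_affine_vdiff_all z.
apply: (eq_lin_form _ l1_lin) => x; move: (gE (x, 0)) (gE (0, 0)).
by rewrite /mixed /vdiff /= !add0r (lin_for0 l1_lin) => E1 E2; lra.
Qed.

Lemma g_mixedE x z : g (x, z) = g (x, 0) + vdiff z g (0, 0) + mixed x z.
Proof. by rewrite /mixed /vdiff /= add0r; ring. Qed.

Lemma affine_fun_horiz_line x y :
  affine_fun (fun t => g (x + t *: y, 0) + t ^+ 2 * mixed y (br x y)).
Proof.
apply: eq_affine_fun (affine_fun_comb 1 (- (vdiff (br x y) g (0, 0) + mixed x (br x y)))
                                       (g_aff (x, 0) y) (@affine_fun_id R)) => t.
rewrite /carnot_mul /= !add0r brZr (g_mixedE _ (t *: _)) (lin_formZ (lin_form_vdiff 0)) (lin_formZ (mixed_linr _)).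
by rewrite (lin_forD (mixed_linl _)) (lin_formZ (mixed_linl _)); ring.
Qed.

(* g (., 0) is affine on lines through 0, so
   g (2 x + t y, 0) = 2 g (x + t/2 y, 0) - g (0, 0): the t^2 coefficient of the
   left side is both - mixed y [2x, y] = - 2 mixed y [x,y] and - mixed y [x,y] / 2.
   The midpoint identities at t = 1 and t = 2 extract these coefficients. *)
Lemma mixed_bracket x y : mixed y (br x y) = 0.
Proof.
have phiZ v t : g (t *: v, 0) = g (0, 0) + t * (g (v, 0) - g (0, 0)).
  have := affine_funE (affine_fun_horiz_line 0 v) t.
  by rewrite br0l (lin_for0 (mixed_linr _)) scale0r scale1r !add0r !mulr0 !addr0.
have := affine_fun_midpoint 1 (affine_fun_horiz_line x y).
have := affine_fun_midpoint 2 (affine_fun_horiz_line (2 *: x) y).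
rewrite brZl (lin_formZ (mixed_linr _)) !scale0r !addr0 !scaleNr -!scalerN !scale1r.
rewrite -!scalerDr !phiZ !expr2 => E2 E1; lra.
Qed.

Lemma alternating_mixed : alternating_form mixed.
Proof.
split; first by split; [apply: mixed_linl | apply: mixed_linr].
by move=> x x'; rewrite br_skew (lin_forN (mixed_linr _)) mixed_bracket oppr0.
Qed.

Lemma exists_mixed_neq0 : exists x z, mixed x z <> 0.
Proof.
apply: NNPP => mixed0; apply: g_naff.
have h_lin : lin_form (fun x => g (x, 0) - g (0, 0)).
  apply: lin_form_affine_lines => x y.
  apply: eq_affine_fun (affine_fun_horiz_line x y) => t.
  by rewrite mixed_bracket mulr0 addr0.
exists (fun x => g (x, 0) - g (0, 0)), (fun z => vdiff z g (0, 0)), (g (0, 0)).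
split => //; first exact: lin_form_vdiff.
move=> [x z]; rewrite g_mixedE /=.
have -> : mixed x z = 0 by apply: NNPP => xz_neq0; apply: mixed0; exists x, z.
ring.
Qed.

End FlatVerticalHessian.

Lemma exists_alternating_form : ~ usual_affine g ->
  exists b x z, alternating_form b /\ b x z <> 0.
Proof.
move=> g_naff.
case: (classic (exists u u', vhess u u' <> 0)) => [[u [u' uu'_neq0]] | vhess_neq0].
  exact: alternating_form_of_vhess uu'_neq0.
have vhess0 u u' : vhess u u' = 0.
  by apply: NNPP => uu'_neq0; apply: vhess_neq0; exists u, u'.
have [x [z xz_neq0]] := exists_mixed_neq0 g_naff vhess0.
by exists mixed, x, z; split => //; apply: alternating_mixed vhess0.
Qed.

End HorizontallyAffine.

Lemma alternating_formC b x y z : alternating_form b ->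
  b x (br y z) = - b y (br x z).
Proof.
move=> [[b_linl b_linr] b_alt]; have := b_alt (x + y) z.
by rewrite brDl (lin_forD (b_linr _)) !(lin_forD (b_linl _)) !b_alt => E; lra.
Qed.

Lemma alternating_form_free b x1 x2 x3 : alternating_form b ->
  b x1 (br x2 x3) = 1 -> free [:: br x1 x2; br x1 x3; br x2 x3].
Proof.
move=> b_form b123; have [[_ b_linr] b_alt] := b_form.
have b_altr x y : b x (br y x) = 0 by rewrite br_skew (lin_forN (b_linr _)) b_alt oppr0.
have b312 : b x3 (br x1 x2) = 1.
  by rewrite alternating_formC // br_skew (lin_forN (b_linr _)) opprK.
have b213 : b x2 (br x1 x3) = -1 by rewrite alternating_formC // b123.
apply/freeP => k; rewrite !big_ord_recl big_ord0 addr0 /= => k_rel.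
have k_eval x : k ord0 * b x (br x1 x2) + k (lift ord0 ord0) * b x (br x1 x3) +
    k (lift ord0 (lift ord0 ord0)) * b x (br x2 x3) = 0.
  have := congr1 (b x) k_rel.
  by rewrite !(lin_forD (b_linr x)) !(lin_formZ (b_linr x)) (lin_for0 (b_linr x)) addrA.
have := k_eval x3; have := k_eval x2; have := k_eval x1.
rewrite b312 b213 b123 !b_alt !b_altr => eval1 eval2 eval3.
have k0 : k ord0 = 0 by lra.
have k1 : k (lift ord0 ord0) = 0 by lra.
have k2 : k (lift ord0 (lift ord0 ord0)) = 0 by lra.
case=> [[|[|[|//]]] i_lt]; [rewrite -[RHS]k0 | rewrite -[RHS]k1 | rewrite -[RHS]k2].
all: by congr k; apply: val_inj.
Qed.

Lemma alternating_form_normalize b x z : alternating_form b -> b x z <> 0 ->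
  exists x1 x2 x3, b x1 (br x2 x3) = 1.
Proof.
move=> [[b_linl b_linr] _] bxz_neq0.
have [_ /mapP[q _ ->] bxq_neq0] := lin_form_span_neq0 s_span (b_linr x) bxz_neq0.
exists ((b x (br q.1 q.2))^-1 *: x), q.1, q.2.
by rewrite (lin_formZ (b_linl _)) mulVf //; apply/eqP.
Qed.

End Carnot.

Theorem proposition6p8 (R : realType) (V1 V2 : vectType R)
    (br : V1 -> V1 -> V2) :
  step2_carnot br ->
  (forall f : V1 * V2 -> R, usual_affine f -> horiz_affine br f) ->
  (exists f : V1 * V2 -> R, horiz_affine br f /\ ~ usual_affine f) ->
  exists x1 x2 x3 : V1,
    free [:: br x1 x2; br x1 x3; br x2 x3] /\
    exists b : V1 -> V2 -> R,
      [/\ bilin12 b,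
          (forall x x' : V1, b x (br x x') = 0)
        & b x1 (br x2 x3) = 1].
Proof.
move=> [br_lin br_skew [s s_span] _] _ [f [f_haff f_naff]].
have [g [g_haff g_naff s_aff]] := exists_nonaffine_affine_vdiffs br_lin s f_haff f_naff.
have [b [x [z [b_form bxz_neq0]]]] :=
  exists_alternating_form br_lin br_skew s_span g_haff s_aff g_naff.
have [x1 [x2 [x3 b123]]] := alternating_form_normalize s_span b_form bxz_neq0.
exists x1, x2, x3; split; first exact: (alternating_form_free br_lin br_skew b_form b123).
by exists b; case: b_form.
Qed.
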